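(* Let $\mathcal{X}$ be a finite-dimensional Hilbert space, $\Phi,\Psi$ quantum channels on $\mathcal{L}(\mathcal{X})$, and $\sigma=|\psi\rangle\langle\psi|$ a pure state. Then $G_{\mathrm{ch}}(\Phi,\Psi;\sigma)=G(\Phi(\sigma),\Psi(\sigma))$.
   Context: Superfidelity: $G(\rho_1,\rho_2)=\operatorname{Tr}(\rho_1\rho_2)+\sqrt{1-\operatorname{Tr}\rho_1^2}\sqrt{1-\operatorname{Tr}\rho_2^2}$. Channel superfidelity: $G_{\mathrm{ch}}(\Phi,\Psi;\sigma)=\inf G\big((\Phi\otimes\mathbb{1}_{\mathcal{L}(\mathcal{Z})})(\xi),(\Psi\otimes\mathbb{1}_{\mathcal{L}(\mathcal{Z})})(\xi)\big)$ over all finite-dimensional $\mathcal{Z}$ and all pure states $\xi=|\zeta\rangle\langle\zeta|$ on $\mathcal{X}\otimes\mathcal{Z}$ with $\operatorname{Tr}_{\mathcal{Z}}\xi=\sigma$. *)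

(* Finite-dimensional quantum information over an arbitrary
   numClosedFieldType C (the complex numbers being the intended instance). *)
From HB Require Import structures.
From mathcomp Require Import all_boot all_order all_algebra.
Set Implicit Arguments. Unset Strict Implicit. Unset Printing Implicit Defensive.
Import Order.TTheory GRing.Theory Num.Theory.
Local Open Scope ring_scope.

Section Quantum.
Variable C : numClosedFieldType.

Definition mxadj (p q : nat) (A : 'M[C]_(p, q)) : 'M[C]_(q, p) :=
  \matrix_(i, j) (A j i)^*.

Definition psd (k : nat) (A : 'M[C]_k) : Prop :=
  A = mxadj A /\ forall v : 'cV[C]_k, 0 <= (mxadj v *m A *m v) 0 0.

Definition density (k : nat) (A : 'M[C]_k) : Prop := psd A /\ \tr A = 1.

Definition unit_vec (k : nat) (v : 'cV[C]_k) : Prop := mxadj v *m v = 1.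

Definition pure_state (k : nat) (v : 'cV[C]_k) : 'M[C]_k := v *m mxadj v.

(* X (x) Z is identified with C^(n*m) through mxvec_index : 'I_n -> 'I_m -> 'I_(n*m)
   and its inverse unpair. *)
Definition unpair (n m : nat) (p : 'I_(n * m)) : 'I_n * 'I_m :=
  enum_val (cast_ord (esym (mxvec_cast n m)) p).

Definition blk (n m : nat) (xi : 'M[C]_(n * m)) (a b : 'I_m) : 'M[C]_n :=
  \matrix_(i, j) xi (mxvec_index i a) (mxvec_index j b).

(* (Phi (x) 1_{L(Z)}) xi *)
Definition ext_id (n m : nat) (Phi : 'M[C]_n -> 'M[C]_n) (xi : 'M[C]_(n * m))
  : 'M[C]_(n * m) :=
  \matrix_(p, q) Phi (blk xi (unpair p).2 (unpair q).2) (unpair p).1 (unpair q).1.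

Definition ptrace (n m : nat) (xi : 'M[C]_(n * m)) : 'M[C]_n :=
  \matrix_(i, j) \sum_(a < m) xi (mxvec_index i a) (mxvec_index j a).

Definition channel (n : nat) (Phi : 'M[C]_n -> 'M[C]_n) : Prop :=
  [/\ linear Phi,
      (forall A, \tr (Phi A) = \tr A) &
      (forall (m : nat) (xi : 'M[C]_(n * m)), psd xi -> psd (ext_id Phi xi))].

Definition superfid (k : nat) (r1 r2 : 'M[C]_k) : C :=
  \tr (r1 *m r2) + sqrtC (1 - \tr (r1 *m r1)) * sqrtC (1 - \tr (r2 *m r2)).

Definition Gch_set (n : nat) (Phi Psi : 'M[C]_n -> 'M[C]_n) (sigma : 'M[C]_n)
  (x : C) : Prop :=
  exists (m : nat) (zeta : 'cV[C]_(n * m)),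
    [/\ unit_vec zeta, ptrace (pure_state zeta) = sigma &
        x = superfid (ext_id Phi (pure_state zeta)) (ext_id Psi (pure_state zeta))].

Definition is_inf (S : C -> Prop) (v : C) : Prop :=
  (forall x, S x -> v <= x) /\ (forall w, (forall x, S x -> w <= x) -> w <= v).

End Quantum.

From HB Require Import structures.
From mathcomp Require Import all_boot all_order all_algebra.
From mathcomp Require Import ring.
Set Implicit Arguments. Unset Strict Implicit. Unset Printing Implicit Defensive.
Import Order.TTheory GRing.Theory Num.Theory.
Local Open Scope ring_scope.

(* If the reduced state of [zeta] on X is the pure state [psi psi^*], then
   [zeta] is a product vector [psi (x) w], so [(Phi (x) 1)(zeta zeta^* )] is
   [Phi(sigma) (x) w w^*].  The trace is multiplicative on tensor products and
   [w w^*] is a pure state of trace one, so every admissible value of the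
   superfidelity equals [G(Phi sigma, Psi sigma)]; the choice [Z = C] shows
   that the set of admissible values is nonempty. *)

Section Tensor.
Variable C : numClosedFieldType.

Lemma unpairK (n m : nat) (i : 'I_n) (a : 'I_m) : unpair (mxvec_index i a) = (i, a).
Proof. by rewrite /unpair /mxvec_index cast_ordK enum_rankK. Qed.

Lemma big_mxvec_index (n m : nat) (F : 'I_(n * m) -> C) :
  \sum_(p < n * m) F p = \sum_(i < n) \sum_(a < m) F (mxvec_index i a).
Proof.
rewrite pair_big /= (reindex (uncurry (@mxvec_index n m))) /=.
  by apply: eq_bigr => -[i a].
by case: (curry_mxvec_bij n m) => g g1 g2; exists g => x _; [apply: g1|apply: g2].
Qed.

Definition tensmx (n1 n2 m1 m2 : nat) (A : 'M[C]_(n1, n2)) (B : 'M[C]_(m1, m2))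
  : 'M[C]_(n1 * m1, n2 * m2) :=
  \matrix_(p, q) (A (unpair p).1 (unpair q).1 * B (unpair p).2 (unpair q).2).

Lemma tensmxE (n1 n2 m1 m2 : nat) (A : 'M[C]_(n1, n2)) (B : 'M[C]_(m1, m2)) i a j b :
  tensmx A B (mxvec_index i a) (mxvec_index j b) = A i j * B a b.
Proof. by rewrite mxE !unpairK. Qed.

Lemma tensmx_mul (n1 n2 n3 m1 m2 m3 : nat) (A : 'M[C]_(n1, n2)) (A' : 'M[C]_(n2, n3))
    (B : 'M[C]_(m1, m2)) (B' : 'M[C]_(m2, m3)) :
  tensmx A B *m tensmx A' B' = tensmx (A *m A') (B *m B').
Proof.
apply/matrixP => p q; case/mxvec_indexP: p => i a; case/mxvec_indexP: q => j b.
rewrite tensmxE !mxE big_mxvec_index mulr_suml; apply: eq_bigr => k _.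
rewrite mulr_sumr; apply: eq_bigr => c _; rewrite !tensmxE; ring.
Qed.

Lemma mxtrace_tensmx (n m : nat) (A : 'M[C]_n) (B : 'M[C]_m) :
  \tr (tensmx A B) = \tr A * \tr B.
Proof.
rewrite /mxtrace big_mxvec_index mulr_suml; apply: eq_bigr => i _.
by rewrite mulr_sumr; apply: eq_bigr => a _; rewrite tensmxE.
Qed.

Lemma mxtrace_ptrace (n m : nat) (X : 'M[C]_(n * m)) : \tr (ptrace X) = \tr X.
Proof.
by rewrite [RHS]/mxtrace big_mxvec_index; apply: eq_bigr => i _; rewrite mxE.
Qed.

Lemma ext_id_tensmx (n m : nat) (Phi : 'M[C]_n -> 'M[C]_n) (A : 'M[C]_n) (B : 'M[C]_m) :
  scalable Phi -> ext_id Phi (tensmx A B) = tensmx (Phi A) B.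
Proof.
move=> ZPhi; apply/matrixP => p q.
case/mxvec_indexP: p => i a; case/mxvec_indexP: q => j b.
rewrite mxE !unpairK /=.
have -> : blk (tensmx A B) a b = B a b *: A.
  by apply/matrixP => k l; rewrite [LHS]mxE tensmxE mxE mulrC.
by rewrite tensmxE ZPhi mxE mulrC.
Qed.

Lemma superfid_tensmx (n m : nat) (A B : 'M[C]_n) (W : 'M[C]_m) :
  \tr (W *m W) = 1 -> superfid (tensmx A W) (tensmx B W) = superfid A B.
Proof. by move=> trW; rewrite /superfid !tensmx_mul !mxtrace_tensmx trW !mulr1. Qed.

End Tensor.

Section PureStates.
Variable C : numClosedFieldType.

Lemma mxadjM (p q r : nat) (A : 'M[C]_(p, q)) (B : 'M[C]_(q, r)) :
  mxadj (A *m B) = mxadj B *m mxadj A.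
Proof.
apply/matrixP => i j; rewrite !mxE rmorph_sum; apply: eq_bigr => k _.
by rewrite !mxE rmorphM mulrC.
Qed.

Lemma mxadj_mul_eq0 (p q : nat) (A : 'M[C]_(p, q)) : A *m mxadj A = 0 -> A = 0.
Proof.
move=> AA0; apply/matrixP => i j; rewrite mxE; apply/eqP.
have : \sum_k A i k * (A i k)^* = 0.
  transitivity ((A *m mxadj A) i i); last by rewrite AA0 mxE.
  by rewrite mxE; apply: eq_bigr => k _; rewrite mxE.
move/psumr_eq0P => /(_ (fun k _ => mul_conjC_ge0 (A i k))) /(_ j isT).
by move/eqP; rewrite mul_conjC_eq0.
Qed.

Lemma mxtrace_pure_state (k : nat) (v : 'cV[C]_k) :
  \tr (pure_state v) = (mxadj v *m v) 0 0.
Proof. by rewrite mxtrace_mulC trace_mx11. Qed.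

Lemma unit_vecP (k : nat) (v : 'cV[C]_k) : unit_vec v <-> \tr (pure_state v) = 1.
Proof.
rewrite mxtrace_pure_state /unit_vec; split=> [-> | h]; first by rewrite mxE.
by rewrite [LHS]mx11_scalar h.
Qed.

Lemma pure_state_mul (k : nat) (v : 'cV[C]_k) :
  pure_state v *m pure_state v = \tr (pure_state v) *: pure_state v.
Proof.
rewrite /pure_state mulmxA -(mulmxA v) [mxadj v *m v]mx11_scalar.
by rewrite -mxtrace_pure_state mul_mx_scalar -scalemxAl.
Qed.

Definition vec_col (n m : nat) (v : 'cV[C]_(n * m)) : 'M[C]_(n, m) := vec_mx v^T.

Lemma ptrace_pure_state (n m : nat) (v : 'cV[C]_(n * m)) :
  ptrace (pure_state v) = vec_col v *m mxadj (vec_col v).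
Proof.
by apply/matrixP => i j; rewrite !mxE; apply: eq_bigr => a _; rewrite !mxE big_ord1 !mxE.
Qed.

Lemma pure_state_factor (n m : nat) (v : 'cV[C]_(n * m)) (x : 'cV[C]_n) (r : 'rV[C]_m) :
  vec_col v = x *m r -> pure_state v = tensmx (pure_state x) (pure_state r^T).
Proof.
move=> vxr; apply/matrixP => p q.
case/mxvec_indexP: p => i a; case/mxvec_indexP: q => j b.
have vE c l : v (mxvec_index l c) 0 = x l 0 * r 0 c.
  by have := congr1 (fun M : 'M_(n, m) => M l c) vxr; rewrite !mxE big_ord1.
rewrite tensmxE !mxE !big_ord1 !mxE !vE rmorphM; ring.
Qed.

(* [(1 - x x^* ) M] has zero Gram matrix, hence vanishes. *)
Lemma gram_pure_factor (n m : nat) (x : 'cV[C]_n) (M : 'M[C]_(n, m)) :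
  unit_vec x -> M *m mxadj M = pure_state x -> M = x *m (mxadj x *m M).
Proof.
move=> ux MM; pose P := 1%:M - pure_state x.
have Px : P *m x = 0 by rewrite mulmxBl mul1mx -mulmxA ux mulmx1 subrr.
have : P *m M = 0.
  apply: mxadj_mul_eq0; rewrite mxadjM mulmxA -(mulmxA P) MM.
  by rewrite /pure_state mulmxA Px !mul0mx.
by rewrite mulmxBl mul1mx mulmxA => /eqP; rewrite subr_eq0 => /eqP.
Qed.

Lemma ptrace_pure_factor (n m : nat) (x : 'cV[C]_n) (v : 'cV[C]_(n * m)) :
  unit_vec x -> ptrace (pure_state v) = pure_state x ->
  exists w : 'cV[C]_m, pure_state v = tensmx (pure_state x) (pure_state w).
Proof.
move=> ux; rewrite ptrace_pure_state => /(gram_pure_factor ux) vE.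
by exists (mxadj x *m vec_col v)^T; apply: pure_state_factor.
Qed.

End PureStates.

Theorem corollary3 (C : numClosedFieldType) (n : nat)
  (Phi Psi : 'M[C]_n -> 'M[C]_n) (psi : 'cV[C]_n) :
  channel Phi -> channel Psi -> unit_vec psi ->
  is_inf (Gch_set Phi Psi (pure_state psi))
    (superfid (Phi (pure_state psi)) (Psi (pure_state psi))).
Proof.
move=> [/scalable_linear ZPhi _ _] [/scalable_linear ZPsi _ _] upsi.
have Gch_const x : Gch_set Phi Psi (pure_state psi) x ->
    x = superfid (Phi (pure_state psi)) (Psi (pure_state psi)).
  move=> [m [zeta [/unit_vecP uz pt ->]]].
  have [w zE] := ptrace_pure_factor upsi pt.
  have trw : \tr (pure_state w) = 1.
    by rewrite -uz zE mxtrace_tensmx (unit_vecP psi).1 // mul1r.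
  by rewrite zE !ext_id_tensmx // superfid_tensmx // pure_state_mul trw scale1r.
split=> [x /Gch_const -> // | v vlb].
pose zeta : 'cV[C]_(n * 1) := (mxvec psi)^T.
have pt : ptrace (pure_state zeta) = pure_state psi.
  by rewrite ptrace_pure_state /vec_col trmxK mxvecK.
have Gzeta : Gch_set Phi Psi (pure_state psi)
    (superfid (ext_id Phi (pure_state zeta)) (ext_id Psi (pure_state zeta))).
  exists 1%N, zeta; split=> //.
  by apply/unit_vecP; rewrite -mxtrace_ptrace pt; apply/unit_vecP.
by rewrite -(Gch_const _ Gzeta); apply: vlb.
Qed.
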